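(* Under standing assumption (S), let $R$ be a commutative $D$-module algebra which is Noetherian as a ring and simple as a $D$-module algebra, and assume each $g\in G$ acts as an injective endomorphism of $R$. Let $G$ act on $\Omega(R)$ from the right by $P.g=g^{-1}(P)$, let $G_P=\{g\in G:g^{-1}(P)=P\}$ and $G_{\Omega(R)}=\bigcap_{Q\in\Omega(R)}G_Q$. Then: (1) every $P\in\Omega(R)$ is $D^1$-stable, so that $R/P$ is a $D(G_P)$-module domain, and $R/P$ is simple as a $D(G_{\Omega(R)})$-module algebra; (2) the action of $G$ on $\Omega(R)$ is transitive (in particular the stabilizers $G_P$ are conjugate); (3) the natural map $R\to\prod_{P\in\Omega(R)}R/P$ is an isomorphism.
   Context: Standing assumption (S): $C$ is a field, $G$ a monoid, $CG$ the monoid algebra as a $C$-bialgebra with $\Delta(g)=g\otimes g$, $\varepsilon(g)=1$; $D^1$ is a pointed irreducible cocommutative Hopf algebra over $C$ of Birkhoff–Witt type (as a coalgebra the cofree pointed irreducible cocommutative coalgebra $B(U)$ on some $C$-vector space $U$, in Sweedler's sense) which is a $CG$-module algebra; $D=D^1\#CG$ is the smash product and $D(G')=D^1\#CG'$ for a submonoid $G'$. A $D$-module algebra is a $C$-algebra with a $D$-action satisfying $d.(ab)=\sum(d_{(1)}.a)(d_{(2)}.b)$, $d.1=\varepsilon(d)1$; each $g\in G$ acts as a $C$-algebra endomorphism $a\mapsto g.a$, and $g^{-1}(P)$ is the preimage of $P$. An ideal $I$ is $D$-stable (resp. $D^1$-stable) if $d.I\subseteq I$ for all $d\in D$ (resp.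 $D^1$); $R$ is simple if its only $D$-stable ideals are $0$ and $R$. $\Omega(R)$ is the set of minimal prime ideals of $R$. *)

From HB Require Import structures.
From mathcomp Require Import all_boot all_order all_algebra.
Set Implicit Arguments. Unset Strict Implicit. Unset Printing Implicit Defensive.
Import GRing.Theory.
Local Open Scope ring_scope.

(* Linear algebra over a field C, without tensor products: elements   *)
(* of V (x) V are handled in Sweedler form as finite lists of pairs,  *)
(* and equalities in V (x) V (resp. V (x) V (x) V) are expressed      *)
(* through the universal property: equality after applying every      *)
(* bilinear (resp. trilinear) map into every C-vector space W.        *)

Definition linP (C : fieldType) (U V : lmodType C) (f : U -> V) : Prop :=
  forall (a : C) (x y : U), f (a *: x + y) = a *: f x + f y.

Definition bilinP (C : fieldType) (U V W : lmodType C) (b : U -> V -> W) : Prop :=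
  (forall u, linP (b u)) /\ (forall v, linP (fun u => b u v)).

Definition trilinP (C : fieldType) (U W : lmodType C) (t : U -> U -> U -> W) : Prop :=
  [/\ (forall u v, linP (t u v)), (forall u w, linP (fun v => t u v w))
    & (forall v w, linP (fun u => t u v w))].

Definition sw (V : Type) (W : nmodType) (cop : V -> seq (V * V))
  (b : V -> V -> W) (v : V) : W := \sum_(p <- cop v) b p.1 p.2.

Definition coalgebraP (C : fieldType) (V : lmodType C)
  (cop : V -> seq (V * V)) (eps : V -> C) : Prop :=
  [/\ (forall (W : lmodType C) (b : V -> V -> W), bilinP b -> linP (sw cop b)),
      (forall (a : C) (x y : V), eps (a *: x + y) = a * eps x + eps y),
      (forall (W : lmodType C) (t : V -> V -> V -> W), trilinP t -> forall v,
         \sum_(p <- cop v) \sum_(q <- cop p.1) t q.1 q.2 p.2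
         = \sum_(p <- cop v) \sum_(q <- cop p.2) t p.1 q.1 q.2),
      (forall v, \sum_(p <- cop v) eps p.1 *: p.2 = v)
    & (forall v, \sum_(p <- cop v) eps p.2 *: p.1 = v)].

Definition cocommutativeP (C : fieldType) (V : lmodType C)
  (cop : V -> seq (V * V)) : Prop :=
  forall (W : lmodType C) (b : V -> V -> W), bilinP b ->
    forall v, sw cop b v = sw cop (fun x y => b y x) v.

Definition hopfP (C : fieldType) (H : algType C)
  (cop : H -> seq (H * H)) (eps : H -> C) (S : H -> H) : Prop :=
  [/\ coalgebraP cop eps,
      (forall (W : lmodType C) (b : H -> H -> W), bilinP b -> forall x y : H,
         sw cop b (x * y)
         = \sum_(p <- cop x) \sum_(q <- cop y) b (p.1 * q.1) (p.2 * q.2)),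
      (forall (W : lmodType C) (b : H -> H -> W), bilinP b -> sw cop b 1 = b 1 1),
      (forall x y : H, eps (x * y) = eps x * eps y) /\ eps 1 = 1
    & [/\ linP S,
          (forall x, \sum_(p <- cop x) S p.1 * p.2 = (eps x)%:A)
        & (forall x, \sum_(p <- cop x) p.1 * S p.2 = (eps x)%:A)]].

(* Multi-indices are functions n : I -> nat of finite support.                *)
Definition fsupp (I : eqType) (n : I -> nat) (s : seq I) : Prop :=
  forall i, i \notin s -> n i = 0%N.

(* all a <= n (pointwise), for n supported in the duplicate-free list s *)
Fixpoint lowers (I : eqType) (s : seq I) (n : I -> nat) : seq (I -> nat) :=
  if s is i :: s' then
    flatten [seq [seq (fun j => if j == i then k else a j) | k <- iota 0 (n i).+1]
            | a <- lowers s' n]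
  else [:: fun _ => 0%N].

Definition zero_mi (I : Type) : I -> nat := fun _ => 0%N.

(* The coalgebra (V, cop, eps) is isomorphic to B(U) for some vector space U:  *)
(* V has a basis (e_n) indexed by finitely supported multi-indices n : I -> nat *)
(* with  Delta(e_n) = sum_{a+b=n} e_a (x) e_b  and  eps(e_n) = [n = 0].         *)
Definition BW_typeP (C : fieldType) (V : lmodType C)
  (cop : V -> seq (V * V)) (eps : V -> C) : Prop :=
  exists (I : eqType) (e : (I -> nat) -> V),
  [/\
      (forall v : V, exists (ns : seq (I -> nat)) (cs : seq C),
         [/\ forall k, (k < size ns)%N -> exists s, fsupp (nth (@zero_mi I) ns k) s,
             size cs = size ns
           & v = \sum_(k < size ns) cs`_k *: e (nth (@zero_mi I) ns k)]),
      (forall (ns : seq (I -> nat)) (cs : seq C),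
         (forall k, (k < size ns)%N -> exists s, fsupp (nth (@zero_mi I) ns k) s) ->
         size cs = size ns ->
         (forall j k, (j < k)%N -> (k < size ns)%N ->
            exists i, nth (@zero_mi I) ns j i <> nth (@zero_mi I) ns k i) ->
         \sum_(k < size ns) cs`_k *: e (nth (@zero_mi I) ns k) = 0 ->
         forall k, (k < size ns)%N -> cs`_k = 0),
      (forall (n : I -> nat) (s : seq I), uniq s -> fsupp n s ->
         forall (W : lmodType C) (b : V -> V -> W), bilinP b ->
         sw cop b (e n) = \sum_(a <- lowers s n) b (e a) (e (fun i => (n i - a i)%N)))
    &
      (forall (n : I -> nat) (s : seq I), fsupp n s ->
         eps (e n) = if all (fun i => n i == 0%N) s then 1 else 0)].

Definition monoidP (G : Type) (gmul : G -> G -> G) (gone : G) : Prop :=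
  [/\ forall x y z, gmul x (gmul y z) = gmul (gmul x y) z,
      forall x, gmul gone x = x
    & forall x, gmul x gone = x].

(* hact makes the algebra A a (left) CG-module algebra (Delta g = g (x) g, eps g = 1). *)
Definition CG_module_algebraP (C : fieldType) (G : Type) (gmul : G -> G -> G)
  (gone : G) (A : algType C) (hact : G -> A -> A) : Prop :=
  [/\ forall x, hact gone x = x,
      forall g h x, hact (gmul g h) x = hact g (hact h x),
      forall g, linP (hact g),
      forall g x y, hact g (x * y) = hact g x * hact g y
    & forall g, hact g 1 = 1].

Definition H_module_algebraP (C : fieldType) (H : algType C)
  (cop : H -> seq (H * H)) (eps : H -> C) (R : algType C) (dact : H -> R -> R) : Prop :=
  [/\ forall d, linP (dact d),
      forall a, linP (fun d => dact d a),
      (forall a, dact 1 a = a) /\ (forall x y a, dact (x * y) a = dact x (dact y a)),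
      forall d a b, dact d (a * b) = sw cop (fun x y => dact x a * dact y b) d
    & forall d, dact d 1 = eps d *: 1].

(* R is a D = D^1 # CG - module algebra, where the action of d # g is           *)
(* a |-> dact d (gact g a); this is equivalent to: R is a D^1-module algebra,   *)
(* a CG-module algebra, and the two actions satisfy the smash-product relation  *)
(* (1#g)(d#1) = (g.d)#g.                                                        *)
Definition D_module_algebraP (C : fieldType) (G : Type) (gmul : G -> G -> G) (gone : G)
  (D1 : algType C) (cop : D1 -> seq (D1 * D1)) (eps : D1 -> C) (hact : G -> D1 -> D1)
  (R : algType C) (dact : D1 -> R -> R) (gact : G -> R -> R) : Prop :=
  [/\ H_module_algebraP cop eps dact,
      CG_module_algebraP gmul gone gact
    & forall g d a, gact g (dact d a) = dact (hact g d) (gact g a)].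

Definition idealP (R : comNzRingType) (I : R -> Prop) : Prop :=
  [/\ I 0, forall x y, I x -> I y -> I (x + y) & forall r x, I x -> I (r * x)].

Definition primeP (R : comNzRingType) (P : R -> Prop) : Prop :=
  [/\ idealP P, ~ P 1 & forall a b, P (a * b) -> P a \/ P b].

Definition minimal_primeP (R : comNzRingType) (P : R -> Prop) : Prop :=
  primeP P /\
  forall Q, primeP Q -> (forall x, Q x -> P x) -> forall x, P x -> Q x.

Definition noetherianP (R : comNzRingType) : Prop :=
  forall I : nat -> R -> Prop, (forall n, idealP (I n)) ->
    (forall n x, I n x -> I n.+1 x) ->
    exists N, forall n, (N <= n)%N -> forall x, I n x -> I N x.

Definition D_stableP (D1 G R : Type) (dact : D1 -> R -> R) (gact : G -> R -> R)
  (I : R -> Prop) : Prop :=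
  (forall d x, I x -> I (dact d x)) /\ (forall g x, I x -> I (gact g x)).

Definition D_simpleP (D1 G : Type) (R : comNzRingType) (dact : D1 -> R -> R)
  (gact : G -> R -> R) : Prop :=
  forall I, idealP I -> D_stableP dact gact I -> (forall x, I x -> x = 0) \/ (forall x, I x).

Definition gpreim (G R : Type) (gact : G -> R -> R) (g : G) (P : R -> Prop) : R -> Prop :=
  fun x => P (gact g x).

Definition in_stab (G R : Type) (gact : G -> R -> R) (P : R -> Prop) (g : G) : Prop :=
  forall x, gpreim gact g P x <-> P x.

Definition in_stab_Omega (G : Type) (R : comNzRingType) (gact : G -> R -> R) (g : G) : Prop :=
  forall Q, minimal_primeP Q -> in_stab gact Q g.

(* R is a commutative algebra, Noetherian, simple under D^1 # CG, where D^1 has a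
   divided-power (Birkhoff-Witt) basis (e_n) and every g in G acts injectively.
   - Ideals: in a Noetherian ring every ideal contains a product of primes; applied to 0
     this gives primes Q_1 ... Q_m with Q_1 ... Q_m = 0, so every prime contains some Q_i
     and the minimal primes Omega(R) are finitely many, all among the Q_i.
   - Stability (1, first half): for P prime, {x | e_n.x in P for all n} is an ideal inside P
     (Leibniz rule) which is prime by a leading-term argument on Cauchy products of
     divided-power series; for P minimal it equals P, so P is D^1-stable.
   - Action: as each g is injective, every minimal prime is g^{-1} of a minimal prime, so
     P |-> g^{-1}(P) permutes Omega(R); we encode it by permutations fg g of indices.
   - Simplicity: a proper D-stable ideal is 0.  Hence the minimal primes meet in 0 and the
     G-core of a minimal prime is 0; this yields transitivity (2), the decomposition
     1 = sum_i u_i giving the Chinese remainder theorem (3), and, through a finite set of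
     representatives of G_P modulo G_Omega, the simplicity of R/P over D(G_Omega) (1). *)

From Pilot Require Import Defs.
From mathcomp Require Import all_boot all_algebra all_fingroup.
From mathcomp Require Import boolp zify.
Set Implicit Arguments. Unset Strict Implicit. Unset Printing Implicit Defensive.
Import GRing.Theory.
(* [primeP] must refer to prime ideals (Defs), not to the lemma of prime.v. *)
Import Defs.
Local Open Scope ring_scope.

Definition incl (T : Type) (A B : T -> Prop) : Prop := forall x, A x -> B x.

Lemma incl_antisym (T : Type) (A B : T -> Prop) : incl A B -> incl B A -> A = B.
Proof. by move=> AB BA; apply: funext => x; apply: propext; split; [exact: AB|exact: BA]. Qed.

Section Ideals.
Variable R : comNzRingType.
Implicit Types (I J P Q : R -> Prop).

Lemma idealP0 I : idealP I -> I 0. Proof. by case. Qed.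
Lemma idealPD I x y : idealP I -> I x -> I y -> I (x + y). Proof. by case=> _ + _; apply. Qed.
Lemma idealPM I r x : idealP I -> I x -> I (r * x). Proof. by case=> _ _; apply. Qed.
Lemma idealPMr I r x : idealP I -> I x -> I (x * r).
Proof. by rewrite mulrC; exact: idealPM. Qed.
Lemma idealPB I x y : idealP I -> I x -> I y -> I (x - y).
Proof. by move=> idI Ix Iy; apply: idealPD => //; rewrite -mulN1r; exact: idealPM. Qed.
Lemma idealP1 I : idealP I -> I 1 -> forall x, I x.
Proof. by move=> idI I1 x; rewrite -[x]mulr1; exact: idealPM. Qed.

Lemma idealP_sum I (T : Type) (r : seq T) (p : pred T) (F : T -> R) :
  idealP I -> (forall t, p t -> I (F t)) -> I (\sum_(t <- r | p t) F t).
Proof. by move=> idI; apply: (big_ind I); [exact: idealP0|move=> x y; exact: idealPD]. Qed.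

Lemma prime_ideal P : primeP P -> idealP P. Proof. by case. Qed.

Lemma prime_notM P a b : primeP P -> ~ P a -> ~ P b -> ~ P (a * b).
Proof. by case=> _ _ Pab na nb /Pab []. Qed.

Lemma prime_not_prod P (T : Type) (r : seq T) (p : pred T) (F : T -> R) :
  primeP P -> (forall t, p t -> ~ P (F t)) -> ~ P (\prod_(t <- r | p t) F t).
Proof.
by move=> Pp; apply: (big_ind (fun z => ~ P z)); [case: Pp|move=> x y; exact: prime_notM].
Qed.

Lemma minimal_incl_eq P Q : minimal_primeP P -> primeP Q -> incl Q P -> Q = P.
Proof. by move=> [_ Pmin] Qp QP; apply: incl_antisym QP (Pmin Q Qp QP). Qed.

(* [prod_sub Qs I]: the product of the ideals in the list Qs is contained in I. *)
Fixpoint prod_sub (Qs : seq (R -> Prop)) I : Prop :=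
  if Qs is Q :: Qs' then forall q, Q q -> prod_sub Qs' (fun y => I (q * y)) else I 1.

Lemma prod_sub_mono Qs I J : incl I J -> prod_sub Qs I -> prod_sub Qs J.
Proof.
elim: Qs I J => [|Q Qs IH] I J /= IJ; first exact: IJ.
by move=> h q Qq; apply: IH (h q Qq) => y; exact: IJ.
Qed.

Lemma prod_sub_cat Qs Qs' A B I : prod_sub Qs A -> prod_sub Qs' B ->
  (forall x y, A x -> B y -> I (x * y)) -> prod_sub (Qs ++ Qs') I.
Proof.
elim: Qs A I => [|Q Qs IH] A I /= hA hB hAB.
  by apply: prod_sub_mono hB => y By; have := hAB _ _ hA By; rewrite mul1r.
by move=> q Qq; apply: IH (hA q Qq) hB _ => x y Ax By; rewrite mulrA; exact: hAB.
Qed.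

Lemma prod_sub_prime Qs I P : prod_sub Qs I -> incl I P -> primeP P ->
  exists2 Q, Q \in Qs & incl Q P.
Proof.
elim: Qs I => [|Q Qs IH] I /= hQs IP Pp; first by case: Pp => _ + _; case; exact: IP.
have [QP|/existsNP [q /not_implyP [Qq nPq]]] := pselect (incl Q P).
  by exists Q; rewrite ?mem_head.
have [|Q' Q'in Q'P] := IH _ (hQs q Qq) _ Pp.
  by move=> y /IP; case: Pp => _ _ /[apply] [[]].
by exists Q'; rewrite // inE Q'in orbT.
Qed.

Definition has_prime_prod I : Prop :=
  exists2 Qs, (forall Q, Q \in Qs -> primeP Q) & prod_sub Qs I.

Definition ideal_adjoin I (a : R) : R -> Prop := fun z => exists i r, I i /\ z = i + r * a.

Lemma ideal_adjoinP I a : idealP I ->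
  [/\ idealP (ideal_adjoin I a), incl I (ideal_adjoin I a) & ideal_adjoin I a a].
Proof.
move=> idI; split.
- split; first by exists 0, 0; rewrite mul0r addr0; split=> //; exact: idealP0.
  + move=> _ _ [i [r [Ii ->]]] [j [s [Ij ->]]]; exists (i + j), (r + s).
    by rewrite mulrDl addrACA; split=> //; exact: idealPD.
  + move=> t _ [i [r [Ii ->]]]; exists (t * i), (t * r).
    by rewrite mulrDr mulrA; split=> //; exact: idealPM.
- by move=> x Ix; exists x, 0; rewrite mul0r addr0.
- by exists 0, 1; rewrite add0r mul1r; split=> //; exact: idealP0.
Qed.

(* An ideal containing no product of primes is strictly contained in another such ideal:
   it is not prime, and if ab ∈ I with a, b ∉ I then (I + Ra)(I + Rb) ⊆ I. *)
Lemma strict_enlargement I : idealP I -> ~ has_prime_prod I ->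
  exists J, [/\ idealP J, incl I J, (exists x, J x /\ ~ I x) & ~ has_prime_prod J].
Proof.
move=> idI nI.
have nI1 : ~ I 1 by move=> I1; apply: nI; exists [::].
have [a [b [Iab [nIa nIb]]]] : exists a b, I (a * b) /\ ~ I a /\ ~ I b.
  apply: contrapT => hn; apply: nI; exists [:: I] => [Q|]; last by move=> q /=; rewrite mulr1.
  rewrite inE => /eqP ->; split=> // a b Iab.
  have [Ia|nIa] := pselect (I a); [by left|right].
  by apply: contrapT => nIb; apply: hn; exists a, b.
have [idA IA Aa] := ideal_adjoinP a idI; have [idB IB Bb] := ideal_adjoinP b idI.
have [[Qs hQs pA]|] := pselect (has_prime_prod (ideal_adjoin I a)); last first.
  by move=> nA; exists (ideal_adjoin I a); split=> //; exists a.
have [[Qs' hQs' pB]|] := pselect (has_prime_prod (ideal_adjoin I b)); last first.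
  by move=> nB; exists (ideal_adjoin I b); split=> //; exists b.
case: nI; exists (Qs ++ Qs') => [Q|].
  by rewrite mem_cat => /orP [] ?; [exact: hQs|exact: hQs'].
apply: prod_sub_cat pA pB _ => _ _ [i [r [Ii ->]]] [j [s [Ij ->]]].
rewrite mulrDl !mulrDr mulrACA.
by apply: (idealPD idI); apply: (idealPD idI); solve [exact: idealPMr|exact: idealPM].
Qed.

(* In a Noetherian ring every ideal contains a finite product of prime ideals:
   otherwise [strict_enlargement] builds a strictly increasing chain of ideals. *)
Lemma noetherian_prime_prod : noetherianP R -> forall I, idealP I -> has_prime_prod I.
Proof.
move=> noethR I0 idI0; apply: contrapT => nI0.
pose bad I := idealP I /\ ~ has_prime_prod I.
have /choice [next nextP] : forall I, exists J, bad I ->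
    [/\ bad J, incl I J & exists x, J x /\ ~ I x].
  move=> I; have [[idI nI]|nbad] := pselect (bad I); last by exists I.
  by have [J [idJ IJ gap nJ]] := strict_enlargement idI nI; exists J.
pose c n := iter n next I0.
have c_bad n : bad (c n) by elim: n => [|n IH] //=; case: (nextP _ IH).
have c_incl n : incl (c n) (c n.+1) by case: (nextP _ (c_bad n)).
have [N stopN] := noethR c (fun n => (c_bad n).1) c_incl.
have [_ _ [x [cx ncx]]] := nextP _ (c_bad N).
by apply: ncx; exact: stopN N.+1 (leqnSn N) x cx.
Qed.

End Ideals.

Section MultiIndices.
Variable I : eqType.
Implicit Types (n a : I -> nat) (s : seq I).

Definition upd n (i : I) (k : nat) : I -> nat := fun j => if j == i then k else n j.

Lemma upd_supp n i s k : fsupp n s -> fsupp (upd n i k) (i :: s).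
Proof. by move=> ns j; rewrite inE negb_or /upd => /andP [/negbTE -> /ns]. Qed.

Lemma upd0_supp n i s : fsupp n (i :: s) -> fsupp (upd n i 0) s.
Proof.
by move=> ns j js; rewrite /upd; case: eqP => // /eqP ji; apply: ns; rewrite inE negb_or ji.
Qed.

Lemma updK n i k : n i = k -> upd (upd n i 0) i k = n.
Proof. by move=> nik; apply: funext => j; rewrite /upd; case: eqP => // ->. Qed.

Lemma sum_lowers_cons (V : nmodType) i s n (F : (I -> nat) -> V) :
  \sum_(c <- lowers (i :: s) n) F c
  = \sum_(a <- lowers s n) \sum_(k <- iota 0 (n i).+1) F (upd a i k).
Proof.
have -> : lowers (i :: s) n
  = flatten [seq [seq upd a i k | k <- iota 0 (n i).+1] | a <- lowers s n] by [].
by rewrite big_flatten big_map; apply: eq_bigr => a _; rewrite big_map.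
Qed.

Lemma lowers_supp s n a : a \in lowers s n -> fsupp a s.
Proof.
elim: s a => [|i s IH] a; first by rewrite inE => /eqP ->.
case/flattenP=> _ /mapP [a' a's ->] /mapP [k _ ->]; exact/upd_supp/IH.
Qed.

Lemma eq_lowers s n m : (forall j, j \in s -> n j = m j) -> lowers s n = lowers s m.
Proof.
elim: s => [|i s IH] //= h; rewrite (h i (mem_head _ _)) IH // => j js.
by apply: h; rewrite inE js orbT.
Qed.

End MultiIndices.

(* Leading-term argument: in R/P (P prime) the product of two nonzero formal series in the
   divided-power basis (Cauchy product [conv] of their coefficient families) is nonzero. *)
Section LeadingTerms.
Variables (I : eqType) (R : comNzRingType) (P : R -> Prop).
Hypothesis Pp : primeP P.
Let idP : idealP P := prime_ideal Pp.
Implicit Types (f g : (I -> nat) -> R) (n : I -> nat) (s : seq I).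

Definition conv s f g n : R := \sum_(c <- lowers s n) f c * g (fun j => (n j - c j)%N).

Lemma sum_iota_mod (T : nat -> R) N k0 : (k0 <= N)%N ->
  (forall k, (k <= N)%N -> k != k0 -> P (T k)) -> P (\sum_(k <- iota 0 N.+1) T k - T k0).
Proof.
move=> k0N hT; rewrite (bigD1_seq k0) ?iota_uniq ?mem_iota ?ltnS //.
rewrite -[_ (T k0) _]/(T k0 + _) [T k0 + _]addrC addrK.
rewrite big_seq_cond; apply: idealP_sum => // k /andP [].
by rewrite mem_iota ltnS; exact: hT.
Qed.

Lemma lowest_slice f i s n0 : fsupp n0 (i :: s) -> ~ P (f n0) ->
  exists2 n1, fsupp n1 (i :: s) /\ ~ P (f n1) &
    forall n, fsupp n (i :: s) -> (n i < n1 i)%N -> P (f n).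
Proof.
move=> n0s fn0; pose low k := `[< exists n, [/\ fsupp n (i :: s), ~ P (f n) & n i = k] >].
have ex : exists k, low k by exists (n0 i); apply/asboolP; exists n0.
case: (ex_minnP ex) => _ /asboolP [n1 [n1s fn1 <-]] n1min; exists n1 => // n ns lt.
apply: contrapT => fn; have : low (n i) by apply/asboolP; exists n.
by move/n1min; rewrite leqNgt lt.
Qed.

Lemma conv_not_in_prime s : uniq s -> forall f g n0 m0,
  fsupp n0 s -> fsupp m0 s -> ~ P (f n0) -> ~ P (g m0) ->
  exists2 n, fsupp n s & ~ P (conv s f g n).
Proof.
elim: s => [|i s IH] /=.
  move=> _ f g n0 m0 n0s m0s fn0 gm0; exists (@zero_mi I) => //.
  have zero n : fsupp n [::] -> n = @zero_mi I by move=> ns; apply: funext => j; exact: ns.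
  by rewrite /conv big_seq1; rewrite (zero _ n0s) in fn0; rewrite (zero _ m0s) in gm0;
    exact: prime_notM.
move=> /andP [i_s us] f g n0 m0 n0s m0s fn0 gm0.
have [n1 [n1s fn1] f_low] := lowest_slice n0s fn0.
have [m1 [m1s gm1] g_low] := lowest_slice m0s gm0.
set k0 := n1 i in f_low; set l0 := m1 i in g_low.
(* the slices at coordinates k0 and l0 have a product outside P, by induction *)
pose f' a := f (upd a i k0); pose g' a := g (upd a i l0).
have f'n1 : ~ P (f' (upd n1 i 0)) by rewrite /f' updK.
have g'm1 : ~ P (g' (upd m1 i 0)) by rewrite /g' updK.
have [n' n's Pn'] := IH us f' g' _ _ (upd0_supp n1s) (upd0_supp m1s) f'n1 g'm1.
pose n := upd n' i (k0 + l0).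
have ni : n i = (k0 + l0)%N by rewrite /n /upd eqxx.
have low_n : lowers s n = lowers s n'.
  by apply: eq_lowers => j js; rewrite /n /upd; case: eqP => // ji; rewrite -ji js in i_s.
have n_s : fsupp n (i :: s) := upd_supp (k0 + l0) n's.
exists n => //.
(* modulo P, the inner sum over the i-th coordinate k reduces to its term k = k0,
   so conv (i :: s) f g n is congruent to conv s f' g' n' *)
move=> Pn; apply: Pn'; rewrite -[conv s _ _ _](subKr (conv (i :: s) f g n)).
apply: idealPB => //; rewrite /conv sum_lowers_cons ni low_n -sumrB.
rewrite big_seq; apply: idealP_sum => // a /lowers_supp a_s.
have -> : f' a * g' (fun j => (n' j - a j)%N)
    = f (upd a i k0) * g (fun j => (n j - upd a i k0 j)%N).
  by congr (_ * g _); apply: funext => j; rewrite /n /upd; case: eqP => // _; rewrite addKn.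
apply: sum_iota_mod => [|k kN]; first exact: leq_addr.
rewrite neq_ltn => /orP [lt|gt]; [apply: (idealPMr _ idP)|apply: (idealPM _ idP)].
  by apply: f_low; [exact: upd_supp|rewrite /upd eqxx].
apply: g_low; last by rewrite /n /upd !eqxx; lia.
by move=> j /n_s ->.
Qed.

End LeadingTerms.

Section Linear.
Variables (K : fieldType) (U V : lmodType K) (f : U -> V).
Hypothesis f_lin : linP f.

Lemma lin0 : f 0 = 0.
Proof.
by have := f_lin 1 0 0; rewrite !scale1r addr0 => h; apply: (@addrI _ (f 0)); rewrite addr0 -h.
Qed.
Lemma linD x y : f (x + y) = f x + f y.
Proof. by have := f_lin 1 x y; rewrite !scale1r. Qed.
Lemma linZ a x : f (a *: x) = a *: f x.
Proof. by have := f_lin a x 0; rewrite !addr0 lin0 addr0. Qed.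
Lemma lin_sum (T : Type) (r : seq T) (F : T -> U) :
  f (\sum_(t <- r) F t) = \sum_(t <- r) f (F t).
Proof. exact: (big_morph f linD lin0). Qed.
End Linear.

(* Minimal primes are stable under a Hopf algebra with a divided-power basis: for P prime,
   the elements all of whose basis translates lie in P form a prime ideal inside P (the
   leading-term argument of [conv_not_in_prime] with the Leibniz rule), so equality holds
   when P is minimal. *)
Section DividedPowerStability.
Variables (K : fieldType) (D1 : algType K) (cop : D1 -> seq (D1 * D1)) (eps : D1 -> K).
Variables (R : comAlgType K) (dact : D1 -> R -> R).
Hypothesis dact_alg : H_module_algebraP cop eps dact.
Variables (I : eqType) (e : (I -> nat) -> D1).
Hypothesis e_span : forall v : D1, exists (ns : seq (I -> nat)) (cs : seq K),
  [/\ forall k, (k < size ns)%N -> exists s, fsupp (nth (@zero_mi I) ns k) s,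
      size cs = size ns
    & v = \sum_(k < size ns) cs`_k *: e (nth (@zero_mi I) ns k)].
Hypothesis e_cop : forall (n : I -> nat) (s : seq I), uniq s -> fsupp n s ->
  forall (W : lmodType K) (b : D1 -> D1 -> W), bilinP b ->
  sw cop b (e n) = \sum_(a <- lowers s n) b (e a) (e (fun i => (n i - a i)%N)).
Hypothesis e_eps : forall (n : I -> nat) (s : seq I), fsupp n s ->
  eps (e n) = if all (fun i => n i == 0%N) s then 1 else 0.

Lemma idealPZ (P : R -> Prop) c x : idealP P -> P x -> P (c *: x).
Proof. by move=> idP Px; rewrite -[x]mul1r scalerAl; exact: idealPM. Qed.

Lemma dact_span (P : R -> Prop) a : idealP P ->
  (forall n s, fsupp n s -> P (dact (e n) a)) -> forall d, P (dact d a).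
Proof.
move=> idP h d; have [ns [cs [ns_supp _ ->]]] := e_span d.
case: dact_alg => _ lin_a _ _ _; rewrite (lin_sum (lin_a a)) big_seq.
apply: idealP_sum => // k _; rewrite (linZ (lin_a a)); apply: idealPZ => //.
by have [s ks] := ns_supp k (ltn_ord k); exact: h ks.
Qed.

Lemma dact_basisM (n : I -> nat) (s : seq I) a b : uniq s -> fsupp n s ->
  dact (e n) (a * b) = conv s (fun c => dact (e c) a) (fun c => dact (e c) b) n.
Proof.
move=> us ns; case: dact_alg => _ lin _ dactM _.
rewrite dactM (e_cop us ns) //; split=> [u|v] c x y.
  by rewrite (lin b) mulrDr scalerAr.
by rewrite (lin a) mulrDl scalerAl.
Qed.

Definition basis_core (P : R -> Prop) (x : R) : Prop :=
  forall n s, fsupp n s -> P (dact (e n) x).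

Lemma basis_core_sub P : idealP P -> incl (basis_core P) P.
Proof.
move=> idP x Px; case: dact_alg => _ _ [dact1 _] _ _.
by rewrite -(dact1 x); exact: dact_span.
Qed.

Lemma fsupp_undup (n : I -> nat) s : fsupp n s -> fsupp n (undup s).
Proof. by move=> ns j; rewrite mem_undup; exact: ns. Qed.

Lemma basis_core_ideal P : idealP P -> idealP (basis_core P).
Proof.
move=> idP; case: dact_alg => lin _ _ _ _; split.
- by move=> n s _; rewrite (lin0 (lin _)); exact: idealP0.
- by move=> x y Px Py n s ns; rewrite (linD (lin _)); apply: idealPD (Px _ _ ns) (Py _ _ ns).
- move=> r x Px n s /fsupp_undup ns; rewrite (dact_basisM _ _ (undup_uniq s) ns) /conv.
  by apply: idealP_sum => // c _; apply: idealPM => //; apply: Px => j /ns ->.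
Qed.

Lemma basis_core_prime P : primeP P -> primeP (basis_core P).
Proof.
move=> Pp; have idP := prime_ideal Pp; split; first exact: basis_core_ideal.
  case: Pp => _ nP1 _ P1; apply: nP1; case: dact_alg => _ _ _ _ dact1.
  have := P1 (@zero_mi I) [::] (fun _ _ => erefl).
  by rewrite dact1 (e_eps (s := [::])) // scale1r.
move=> a b Pab; apply: contrapT => /not_orP [].
move=> /existsNP [n0 /existsNP [s0 /not_implyP [n0s Pn0]]].
move=> /existsNP [m0 /existsNP [s1 /not_implyP [m0s Pm0]]].
pose s := undup (s0 ++ s1).
have n0s' : fsupp n0 s by move=> j; rewrite mem_undup mem_cat negb_or => /andP [] /n0s.
have m0s' : fsupp m0 s by move=> j; rewrite mem_undup mem_cat negb_or => /andP [_] /m0s.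
have [n ns []] := conv_not_in_prime Pp (undup_uniq _) (f := fun c => dact (e c) a)
  (g := fun c => dact (e c) b) n0s' m0s' Pn0 Pm0.
by rewrite -(dact_basisM _ _ (undup_uniq _) ns); exact: Pab ns.
Qed.

Theorem minimal_prime_stable P : minimal_primeP P -> forall d x, P x -> P (dact d x).
Proof.
move=> [Pp Pmin] d x Px; have idP := prime_ideal Pp.
have coreP := Pmin _ (basis_core_prime Pp) (basis_core_sub idP).
by apply: dact_span => // n s ns; exact: coreP x Px n s ns.
Qed.

End DividedPowerStability.

Lemma seq_minimal (T : eqType) (le : T -> T -> Prop) (s : seq T) :
  (forall x y z, le x y -> le y z -> le x z) -> (forall x, le x x) ->
  forall x, x \in s -> exists y, [/\ y \in s, le y x & forall z, z \in s -> le z y -> le y z].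
Proof.
move=> le_trans le_refl; elim: s => [|a s IH] // x.
(* a minimal element y of s stays minimal in a :: s unless a is strictly below it *)
have extend y : y \in s -> (forall z, z \in s -> le z y -> le y z) ->
    exists y', [/\ y' \in a :: s, le y' y & forall z, z \in a :: s -> le z y' -> le y' z].
  move=> ys ymin; have [[ay nya]|] := pselect (le a y /\ ~ le y a).
    exists a; split; rewrite ?mem_head // => z; rewrite inE => /orP [/eqP -> //|zs] za.
    exact: le_trans ay (ymin z zs (le_trans _ _ _ za ay)).
  move=> hn; exists y; split; rewrite ?inE ?ys ?orbT // => z.
  rewrite inE => /orP [/eqP -> ay|]; last exact: ymin.
  by apply: contrapT => nya; apply: hn.
rewrite inE => /orP [/eqP ->|xs]; last first.
  have [y [ys yx ymin]] := IH _ xs; have [y' [y'in y'y y'min]] := extend y ys ymin.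
  by exists y'; split=> //; exact: le_trans y'y yx.
have [[z [zs za]]|nbelow] := pselect (exists z, z \in s /\ le z a).
  have [y [ys yz ymin]] := IH _ zs; have [y' [y'in y'y y'min]] := extend y ys ymin.
  by exists y'; split=> //; apply: le_trans (le_trans _ _ _ y'y yz) za.
exists a; split; rewrite ?mem_head // => z; rewrite inE => /orP [/eqP -> //|zs za].
by case: nbelow; exists z.
Qed.

(* A Noetherian ring has finitely many minimal primes, all among the factors Qs of a
   product of primes that vanishes; we enumerate them as U : 'I_k -> Omega(R). *)
Section MinimalPrimes.
Variable R : comNzRingType.
Variable Qs : seq (R -> Prop).
Hypothesis Qs_prime : forall Q, Q \in Qs -> primeP Q.
Hypothesis Qs_zero : prod_sub Qs (fun x => x = 0).
Implicit Types (P Q M : R -> Prop).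

(* Every prime contains a member of Qs (their product is 0), hence a minimal prime
   (take a minimal member of Qs below it); conversely every minimal prime lies in Qs. *)
Lemma prime_above_Qs P : primeP P -> exists2 Q, Q \in Qs & incl Q P.
Proof.
move=> Pp; apply: (prod_sub_prime Qs_zero _ Pp) => x ->.
exact: idealP0 (prime_ideal Pp).
Qed.

Lemma minimal_below P : primeP P -> exists2 M, minimal_primeP M & incl M P.
Proof.
move=> Pp; have [Q Qin QP] := prime_above_Qs Pp.
have [M [Min MQ Mmin]] := @seq_minimal _ (@incl R) Qs
  (fun A B C AB BC x Ax => BC x (AB x Ax)) (fun A x Ax => Ax) Q Qin.
exists M; last by move=> x /MQ /QP.
split=> [|Q' Q'p Q'M]; first exact: Qs_prime.
have [Q'' Q''in Q''Q'] := prime_above_Qs Q'p.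
by move=> x /(Mmin _ Q''in (fun y Q''y => Q'M y (Q''Q' y Q''y))) /Q''Q'.
Qed.

Lemma minimal_in_Qs M : minimal_primeP M -> M \in Qs.
Proof.
move=> [Mp Mmin]; have [Q Qin QM] := prime_above_Qs Mp.
by have <- := incl_antisym QM (Mmin Q (Qs_prime Qin) QM).
Qed.

Definition Omega := undup [seq Q <- Qs | `[< minimal_primeP Q >]].
Definition k := size Omega.
Definition U (i : 'I_k) : R -> Prop := nth (fun _ => False) Omega i.

Lemma mem_Omega Q : Q \in Omega <-> minimal_primeP Q.
Proof.
rewrite mem_undup mem_filter; split=> [/andP [/asboolP //]|Qmin].
by rewrite asboolT //= minimal_in_Qs.
Qed.

Lemma U_min i : minimal_primeP (U i). Proof. by apply/mem_Omega; rewrite /U mem_nth. Qed.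
Lemma U_prime i : primeP (U i). Proof. by case: (U_min i). Qed.
Lemma U_ideal i : idealP (U i). Proof. exact: prime_ideal (U_prime i). Qed.

Lemma U_inj : injective U.
Proof. by move=> i j /eqP; rewrite /U nth_uniq ?undup_uniq // => /eqP/val_inj. Qed.

Lemma U_cover M : minimal_primeP M -> exists i, U i = M.
Proof.
move=> /mem_Omega MO; have Mk : (index M Omega < k)%N by rewrite index_mem.
by exists (Ordinal Mk); rewrite /U nth_index.
Qed.

(* R has a minimal prime: Qs is nonempty as 1 != 0. *)
Lemma Omega_nonempty : (0 < k)%N.
Proof.
case: Qs Qs_prime Qs_zero => [_ /eqP|Q Qs' Qsp _]; first by rewrite oner_eq0.
have [M Mmin _] := minimal_below (Qsp Q (mem_head _ _)).
by have [[i ik] _] := U_cover Mmin; exact: leq_ltn_trans (leq0n i) ik.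
Qed.

Lemma avoid i0 : exists t, ~ U i0 t /\ forall j, j != i0 -> U j t.
Proof.
have /choice [p pP] : forall j, exists z, j != i0 -> U j z /\ ~ U i0 z.
  move=> j; have [->|ji0] := eqVneq j i0; first by exists 0 => /eqP.
  apply: contrapT => none; move/eqP: ji0; apply; apply: U_inj.
  apply: minimal_incl_eq (U_min i0) (U_prime j) _ => z Ujz.
  by apply: contrapT => nz; apply: none; exists z.
exists (\prod_(j | j != i0) p j); split.
  by apply: prime_not_prod (U_prime i0) _ => j /pP [].
move=> j ji0; rewrite (bigD1 j) //=; apply: idealPMr (U_ideal j) _.
by case: (pP j ji0).
Qed.

End MinimalPrimes.

Section GroupAction.
Variables (K : fieldType) (G : Type) (gmul : G -> G -> G) (gone : G).
Variables (R : comAlgType K) (gact : G -> R -> R).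
Hypothesis gact_alg : CG_module_algebraP gmul gone gact.
Hypothesis gact_inj : forall (g : G) (x y : R), gact g x = gact g y -> x = y.
Variable Qs : seq (R -> Prop).
Hypothesis Qs_prime : forall Q, Q \in Qs -> primeP Q.
Hypothesis Qs_zero : prod_sub Qs (fun x => x = 0).
Implicit Types (P Q J : R -> Prop) (g h : G).
Local Notation k := (@k _ Qs).
Local Notation U := (@U _ Qs).
Local Notation U_min := (U_min Qs_prime Qs_zero).
Local Notation U_cover := (U_cover Qs_prime Qs_zero).
Local Notation minimal_below := (minimal_below Qs_prime Qs_zero).

Lemma gact_id x : gact gone x = x. Proof. by case: gact_alg. Qed.
Lemma gact_comp g h x : gact (gmul g h) x = gact g (gact h x). Proof. by case: gact_alg. Qed.
Lemma gact1 g : gact g 1 = 1. Proof. by case: gact_alg. Qed.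
Lemma gactM g x y : gact g (x * y) = gact g x * gact g y. Proof. by case: gact_alg. Qed.
Lemma gact0 g : gact g 0 = 0. Proof. by case: gact_alg => _ _ lin _ _; exact: lin0. Qed.
Lemma gactD g x y : gact g (x + y) = gact g x + gact g y.
Proof. by case: gact_alg => _ _ lin _ _; exact: linD. Qed.
Lemma gact_sum g (T : Type) (r : seq T) (F : T -> R) :
  gact g (\sum_(t <- r) F t) = \sum_(t <- r) gact g (F t).
Proof. exact: (big_morph (gact g) (gactD g) (gact0 g)). Qed.
Lemma gact_prod g (T : Type) (r : seq T) (F : T -> R) :
  gact g (\prod_(t <- r) F t) = \prod_(t <- r) gact g (F t).
Proof. exact: (big_morph (gact g) (gactM g) (gact1 g)). Qed.

Lemma gpreim_comp g h P : gpreim gact (gmul g h) P = gpreim gact h (gpreim gact g P).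
Proof. by apply: funext => x; rewrite /gpreim gact_comp. Qed.
Lemma gpreim_id P : gpreim gact gone P = P.
Proof. by apply: funext => x; rewrite /gpreim gact_id. Qed.

Lemma gpreim_prime g P : primeP P -> primeP (gpreim gact g P).
Proof.
move=> [[P0 PD PM] nP1 Pp]; rewrite /gpreim; split; rewrite ?gact1 //.
  by split=> [|x y|r x]; rewrite ?gact0 ?gactD ?gactM //; [exact: PD|exact: PM].
by move=> a b; rewrite gactM; exact: Pp.
Qed.

Lemma prod_sub_avoid g p Ps J : primeP p -> prod_sub Ps J ->
  (forall Q, Q \in Ps -> exists u, ~ p u /\ Q (gact g u)) -> exists u, ~ p u /\ J (gact g u).
Proof.
move=> pp; elim: Ps J => [|Q Ps IH] J /=.
  by move=> J1 _; exists 1; rewrite gact1; case: pp.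
move=> PsJ hPs; have [u0 [nu0 Qu0]] := hPs Q (mem_head _ _).
have [|u [nu Ju]] := IH _ (PsJ _ Qu0) => [Q' Q'in|]; first by apply: hPs; rewrite inE Q'in orbT.
by exists (u0 * u); rewrite gactM; split=> //; exact: prime_notM.
Qed.

(* Lying over: every minimal prime is the g-preimage of a minimal prime.  Otherwise each Q
   in Qs contains some gact g u with u outside p, and a product of such u is killed by g. *)
Lemma lying_over g p : minimal_primeP p -> exists2 M, minimal_primeP M & gpreim gact g M = p.
Proof.
move=> pmin; have [pp _] := pmin.
have [[Q [Qin Qp]]|none] := pselect (exists Q, Q \in Qs /\ incl (gpreim gact g Q) p).
  have [M Mmin MQ] := minimal_below (Qs_prime Qin); exists M => //.
  apply: minimal_incl_eq pmin (gpreim_prime g (proj1 Mmin)) _ => x Mx; exact/Qp/MQ.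
have [Q Qin|u [nu gu0]] := prod_sub_avoid (g := g) pp Qs_zero.
  apply: contrapT => nu; apply: none; exists Q; split=> // x Qx.
  by apply: contrapT => npx; apply: nu; exists x.
have u0 : u = 0 by apply: (@gact_inj g); rewrite gu0 gact0.
by case: nu; rewrite u0; exact: idealP0 (prime_ideal pp).
Qed.

(* The permutation psi g of 'I_k with g^{-1}(U (psi g i)) = U i, and its inverse fg g,
   which describes the right action P.g = g^{-1}(P) of G on Omega(R). *)
Definition psi g (i : 'I_k) : 'I_k := odflt i [pick j | `[< gpreim gact g (U j) = U i >]].

Lemma psiP g i : gpreim gact g (U (psi g i)) = U i.
Proof.
rewrite /psi; case: pickP => [j /asboolP //|none] /=.
have [M Mmin gM] := lying_over g (U_min i); have [j Uj] := U_cover Mmin.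
by have := none j; rewrite Uj gM asboolT.
Qed.

Lemma psi_inj g : injective (psi g).
Proof. by move=> i j eq_ij; apply: U_inj; rewrite -(psiP g i) -(psiP g j) eq_ij. Qed.

Definition fg g : 'I_k -> 'I_k := invF (@psi_inj g).

Lemma fgP g i : U (fg g i) = gpreim gact g (U i).
Proof. by rewrite -{2}(f_invF (@psi_inj g) i) psiP. Qed.

Lemma fg_inj g : injective (fg g).
Proof. exact: can_inj (f_invF (@psi_inj g)). Qed.

Lemma fg_comp g h i : fg (gmul g h) i = fg h (fg g i).
Proof. by apply: U_inj; rewrite !fgP gpreim_comp. Qed.

Lemma fg_id i : fg gone i = i.
Proof. by apply: U_inj; rewrite fgP gpreim_id. Qed.

Lemma U_gact g i x : U i (gact g x) = U (fg g i) x.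
Proof. by rewrite fgP. Qed.

Lemma gpreim_minimal g P : minimal_primeP P -> minimal_primeP (gpreim gact g P).
Proof. by move=> /U_cover [i <-]; rewrite -fgP; exact: U_min. Qed.

Lemma fg_trivial_stab h : (forall i, fg h i = i) -> in_stab_Omega gact h.
Proof. by move=> hid Q /U_cover [i <-] x; rewrite -fgP hid. Qed.

Definition gpow g m : G := iter m (gmul g) gone.

Lemma fg_gpow g m i : fg (gpow g m) i = iter m (fg g) i.
Proof. by elim: m i => [|m IH] i /=; rewrite ?fg_id // fg_comp IH -iterSr. Qed.

(* Finitely many elements of G_{U a} represent G_{U a} modulo G_Omega: for g fixing a, the
   power h = g^(n-1), n the order of the permutation fg g, inverts g on Omega, and h can be
   replaced by a chosen element inducing the same permutation. *)
Lemma stabilizer_transversal a : exists hs : {ffun 'I_k -> 'I_k} -> G,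
  (forall s, fg (hs s) a = a) /\
  (forall g, fg g a = a -> exists s, in_stab_Omega gact (gmul g (hs s))).
Proof.
have /choice [hs hsP] : forall s : {ffun 'I_k -> 'I_k}, exists h, fg h a = a /\
    forall h', fg h' a = a -> [ffun i => fg h' i] = s -> forall i, fg h i = fg h' i.
  move=> s; have [[h' [h'a h's]]|none] :=
    pselect (exists h', fg h' a = a /\ [ffun i => fg h' i] = s).
    exists h'; split=> // h'' _ h''s i.
    have := congr1 (fun F : {ffun 'I_k -> 'I_k} => F i) (etrans h's (esym h''s)).
    by rewrite !ffunE.
  by exists gone; split=> [|h' h'a h's]; [exact: fg_id|case: none; exists h'].
exists hs; split=> [s|g ga]; first by case: (hsP s).
pose n := #[perm (@fg_inj g)]%g; pose h := gpow g n.-1.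
have ha : fg h a = a by rewrite fg_gpow iter_fix.
exists [ffun i => fg h i]; apply: fg_trivial_stab => i.
rewrite fg_comp (proj2 (hsP _) h ha erefl) -fg_comp.
have -> : gmul g h = gpow g n by rewrite /h /gpow -iterS prednK // order_gt0.
rewrite fg_gpow -(eq_iter (fun j => permE (@fg_inj g) j)) -permX.
by rewrite expg_order perm1.
Qed.

Variables (D1 : algType K) (hact : G -> D1 -> D1) (dact : D1 -> R -> R).
Hypothesis gact_dact : forall g d a, gact g (dact d a) = dact (hact g d) (gact g a).
Hypothesis dact_lin : forall d, linP (dact d).
Hypothesis minimal_stable : forall P, minimal_primeP P -> forall d x, P x -> P (dact d x).
Hypothesis simple : D_simpleP dact gact.
Local Notation U_prime := (U_prime Qs_prime Qs_zero).
Local Notation U_ideal := (U_ideal Qs_prime Qs_zero).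
Local Notation avoid := (avoid Qs_prime Qs_zero).
Local Notation Omega_nonempty := (Omega_nonempty Qs_prime Qs_zero).

Lemma stable_proper_zero J :
  idealP J -> D_stableP dact gact J -> ~ J 1 -> forall x, J x -> x = 0.
Proof. by move=> idJ stJ nJ1; case: (simple idJ stJ) => // /(_ 1). Qed.

(* The largest G-stable ideal {x | gact g x ∈ J for all g} inside a proper D1-stable
   ideal J is D-stable, hence zero. *)
Lemma G_core_zero J : idealP J -> ~ J 1 -> (forall d x, J x -> J (dact d x)) ->
  forall x, (forall g, J (gact g x)) -> x = 0.
Proof.
move=> idJ nJ1 stJ; apply: (stable_proper_zero (J := fun z => forall g, J (gact g z))).
- split=> [g|x y Jx Jy g|r x Jx g]; rewrite ?gact0 ?gactD ?gactM.
  + exact: idealP0.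
  + exact: idealPD.
  + exact: idealPM.
- by split=> [d x Jx g|g x Jx h]; rewrite ?gact_dact -?gact_comp; [exact: stJ|].
- by move/(_ gone); rewrite gact1.
Qed.

(* The intersection of the minimal primes is a proper D-stable ideal, hence zero. *)
Lemma minimal_primes_meet x : (forall i, U i x) -> x = 0.
Proof.
apply: (stable_proper_zero (J := fun z => forall i, U i z)).
- split=> [i|a b Ua Ub i|r a Ua i]; first exact: idealP0 (U_ideal i).
    exact: idealPD (U_ideal i) _ _.
  exact: idealPM (U_ideal i) _.
- by split=> [d z Uz i|g z Uz i]; [exact: minimal_stable (U_min i) _ _ _|rewrite U_gact].
- have i0 : 'I_k := Ordinal Omega_nonempty.
  by move/(_ i0); case: (U_prime i0).
Qed.

(* (2) Transitivity: with t as in [avoid] for Q = U b, t Q lies in every minimal prime,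
   so t Q = 0; some g moves t outside P ([G_core_zero]), whence Q ⊆ g^{-1}(P). *)
Lemma transitive_action P Q : minimal_primeP P -> minimal_primeP Q ->
  exists g, forall x, gpreim gact g P x <-> Q x.
Proof.
move=> Pmin /U_cover [b <-]; have [Pp _] := Pmin; have [t [nt tU]] := avoid b.
have tQ0 q : U b q -> t * q = 0.
  move=> Ubq; apply: minimal_primes_meet => i; have [->|ib] := eqVneq i b.
    exact: idealPM (U_ideal b) _.
  exact: idealPMr (U_ideal i) (tU i ib).
have [g ngt] : exists g, ~ P (gact g t).
  apply: contrapT => none; apply: nt; suff -> : t = 0 by exact: idealP0 (U_ideal b).
  apply: (G_core_zero (prime_ideal Pp)) => [|d x|g]; first by case: Pp.
    exact: minimal_stable.
  by apply: contrapT => ngt; apply: none; exists g.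
exists g; rewrite (minimal_incl_eq (gpreim_minimal g Pmin) (U_prime b)) // => q Ubq.
have : P (gact g (t * q)) by rewrite tQ0 // gact0; exact: idealP0 (prime_ideal Pp).
by rewrite gactM; case: Pp => _ _ /[apply] [[]].
Qed.

(* The sum of the ideals ∩_{j != i} U j is D-stable and nonzero ([avoid]), hence all of R:
   1 = ∑_i u_i with u_i in every U j, j != i. *)
Lemma comaximal_decomposition :
  exists u : 'I_k -> R, (forall i j, j != i -> U j (u i)) /\ \sum_i u i = 1.
Proof.
pose T x := exists u : 'I_k -> R, (forall i j, j != i -> U j (u i)) /\ x = \sum_i u i.
have idT : idealP T.
  split.
  - exists (fun=> 0); rewrite big1 //; split=> // i j _; exact: idealP0 (U_ideal j).
  - move=> _ _ [u [uU ->]] [v [vU ->]]; exists (fun i => u i + v i).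
    by rewrite big_split; split=> // i j ji; apply: idealPD (U_ideal j) _ _; auto.
  - move=> r _ [u [uU ->]]; exists (fun i => r * u i).
    by rewrite mulr_sumr; split=> // i j ji; apply: idealPM (U_ideal j) _; auto.
have stT : D_stableP dact gact T.
  split=> [d _ [u [uU ->]]|g _ [u [uU ->]]].
    exists (fun i => dact d (u i)); rewrite (lin_sum (dact_lin d)); split=> // i j ji.
    exact: minimal_stable (U_min j) _ _ (uU i j ji).
  exists (fun i => gact g (u (fg g i))); rewrite gact_sum (reindex_inj (@fg_inj g)).
  split=> // i j ji; rewrite U_gact; apply: uU.
  by apply: contra ji => /eqP /fg_inj ->.
have i0 : 'I_k := Ordinal Omega_nonempty; have [t [nt tU]] := avoid i0.
have [T0|T1] := simple idT stT; last by have [u [uU /esym u1]] := T1 1; exists u.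
case: nt; suff -> : t = 0 by exact: idealP0 (U_ideal i0).
apply: T0; exists (fun i => if i == i0 then t else 0); split.
  move=> i j ji; case: eqP => [ii0|_]; last exact: idealP0 (U_ideal j).
  by apply: tU; rewrite -ii0.
by rewrite (bigD1 i0) //= eqxx big1 ?addr0 // => i /negbTE ->.
Qed.

Lemma chinese_remainder (f : (R -> Prop) -> R) :
  exists r, forall P, minimal_primeP P -> P (r - f P).
Proof.
have [u [uU u1]] := comaximal_decomposition.
exists (\sum_i u i * f (U i)) => P /U_cover [a <-].
rewrite -[f (U a)]mul1r -u1 mulr_suml -sumrB; apply: idealP_sum => [|i _].
  exact: U_ideal.
rewrite -mulrBr; have [->|ia] := eqVneq i a.
  by rewrite subrr mulr0; exact: idealP0 (U_ideal a).
by apply: idealPMr (U_ideal a) _; apply: uU; rewrite eq_sym.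
Qed.

(* Given J ⊋ P proper, x in J \ P and t
   as in [avoid], y = t ∏_s hs(s).x lies outside P, but every g.y lies in J: either g moves
   P and then g.t ∈ P, or g fixes P and some g hs(s) in G_Omega gives g.(hs(s).x) ∈ J.
   So y = 0 by [G_core_zero]. *)
Lemma quotient_simple P : minimal_primeP P ->
  forall J, idealP J -> incl P J -> (forall d x, J x -> J (dact d x)) ->
  (forall g, in_stab_Omega gact g -> forall x, J x -> J (gact g x)) ->
  incl J P \/ (forall x, J x).
Proof.
move=> /U_cover [a <-] J idJ PJ Jd JG.
have [|/existsNP [x /not_implyP [Jx nx]]] := pselect (incl J (U a)); first by left.
have [J1|nJ1] := pselect (J 1); [by right; exact: idealP1|exfalso].
have [t [nt tU]] := avoid a; have [hs [hs_fix hs_cover]] := stabilizer_transversal a.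
pose y := t * \prod_(s : {ffun 'I_k -> 'I_k}) gact (hs s) x.
have ny : ~ U a y.
  apply: prime_notM (U_prime a) nt (prime_not_prod (U_prime a) _) => s _.
  by rewrite U_gact hs_fix.
apply: ny; suff -> : y = 0 by exact: idealP0 (U_ideal a).
apply: (G_core_zero idJ nJ1 Jd) => g; rewrite gactM gact_prod.
have [ga|gna] := eqVneq (fg g a) a; last first.
  by apply: idealPMr idJ _; apply/PJ; rewrite U_gact; exact: tU.
have [s sO] := hs_cover g ga; have := JG _ sO x Jx; rewrite gact_comp => Jgx.
by rewrite (bigD1 s) //=; apply: (idealPM _ idJ); exact: (idealPMr _ idJ).
Qed.

End GroupAction.

Unset Implicit Arguments.
Theorem mainTheorem10
  (C : fieldType)
  (G : Type) (gmul : G -> G -> G) (gone : G)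
  (D1 : algType C) (cop : D1 -> seq (D1 * D1)) (eps : D1 -> C) (S : D1 -> D1)
  (hact : G -> D1 -> D1)
  (R : comAlgType C) (dact : D1 -> R -> R) (gact : G -> R -> R) :
  (* standing assumption (S) *)
  monoidP gmul gone ->
  hopfP cop eps S ->
  cocommutativeP cop ->
  BW_typeP cop eps ->
  CG_module_algebraP gmul gone hact ->
  (* R is a commutative D-module algebra, Noetherian, simple *)
  D_module_algebraP gmul gone cop eps hact dact gact ->
  noetherianP R ->
  D_simpleP dact gact ->
  (* each g acts injectively *)
  (forall (g : G) (x y : R), gact g x = gact g y -> x = y) ->
  (* (1) *)
  [/\ (forall P : R -> Prop, minimal_primeP P ->
         forall d x, P x -> P (dact d x)),
      (forall P : R -> Prop, minimal_primeP P ->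
         forall J : R -> Prop, idealP J -> (forall x, P x -> J x) ->
         (forall d x, J x -> J (dact d x)) ->
         (forall g : G, in_stab_Omega gact g -> forall x, J x -> J (gact g x)) ->
         (forall x, J x -> P x) \/ (forall x, J x)),
  (* (2) G acts on Omega(R) by P.g = g^{-1}(P), transitively *)
      (forall (P : R -> Prop) (g : G), minimal_primeP P -> minimal_primeP (gpreim gact g P)),
      (forall P Q : R -> Prop, minimal_primeP P -> minimal_primeP Q ->
         exists g : G, forall x, gpreim gact g P x <-> Q x)
  (* (3) R -> prod_{P in Omega(R)} R/P is bijective *)
    & (forall r : R, (forall P, minimal_primeP P -> P r) -> r = 0) /\
      (forall f : (R -> Prop) -> R, exists r : R,
         forall P, minimal_primeP P -> P (r - f P))].
Proof.
move=> _ _ _ [I [e [e_span _ e_cop e_eps]]] _ [dact_alg gact_alg gact_dact] noethR simple gact_inj.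
have stable := minimal_prime_stable dact_alg e_span e_cop e_eps.
have dact_lin : forall d, linP (dact d) by case: dact_alg.
have [Qs Qs_prime Qs_zero] : has_prime_prod (fun x : R => x = 0).
  apply: (noetherian_prime_prod noethR).
  by split=> [|x y -> ->|r x ->]; rewrite ?addr0 ?mulr0.
split.
- exact: stable.
- move=> P Pmin J idJ PJ Jd JG.
  exact: (quotient_simple gact_alg gact_inj Qs_prime Qs_zero gact_dact simple Pmin idJ PJ Jd JG).
- by move=> P g; exact: (gpreim_minimal gact_alg gact_inj Qs_prime Qs_zero g).
- exact: (transitive_action gact_alg gact_inj Qs_prime Qs_zero gact_dact stable simple).
- split=> [r rP|].
    apply: (minimal_primes_meet gact_alg gact_inj Qs_prime Qs_zero stable simple) => i.
    by apply: rP; exact: U_min.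
  exact: (chinese_remainder gact_alg gact_inj Qs_prime Qs_zero dact_lin stable simple).
Qed.
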